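(* Let $r,m\ge1$, $W\in\mathbb{R}^{m\times r}$, $b\in\mathbb{R}^m$, $\sigma^2>0$, and $h(z)=a(Wz+b)$ where $a(x)=\log(1+e^x)$ is applied componentwise. Suppose $Z\sim N(0,I_r)$ and $X\mid\{Z=z\}\sim N(h(z),\sigma^2I_m)$. Fix $x\in\mathbb{R}^m$, let $p(z\mid x)$ be the conditional density of $Z$ given $X=x$, and set $V(z)=-\log p(z\mid x)$. Then $V$ is bounded below, $V$ satisfies conditions (b) and (c) of Assumption A1, and for every $\gamma>0$ there exist $\alpha>0$ and $\beta\in(0,1)$ such that Assumption A2 holds for $V$ (equivalently, $V-\inf V$ satisfies Assumptions A1 and A2).
   Context: A map $\phi:\mathbb{R}^a\to\mathbb{R}^b$ has polynomial growth if there are $C>0$ and an integer $m\ge0$ with $\Vert\phi(x)\Vert\le C(1+\Vert x\Vert^m)$ for all $x$; $\mathscr{C}^\infty_{poly}$ denotes the infinitely differentiable maps such that the map and all its derivatives have polynomial growth. Norms of matrices are operator norms. Assumption A1: (a) $V(x)\ge0$ for all $x\in\mathbb{R}^r$; (b) $\Vert\nabla^2V(x)\Vert\le\nu$ for some constant $\nu>0$ and all $x$; (c) $V\in\mathscr{C}^\infty_{poly}$. Assumption A2 (for a given $\gamma>0$): there exist constants $\alpha>0$ and $0<\beta<1$ such that for all $x\in\mathbb{R}^r$, $\frac12\langle\nabla V(x),x\rangle\ge\beta V(x)+\gamma^2C_\beta\Vert x\Vert^2-\alpha$, where $C_\beta=\frac{\beta(2-\beta)}{8(1-\beta)}$. 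*)

From Stdlib Require Import Reals List.
Open Scope R_scope.

(* Vectors of R^k are represented as functions nat -> R; only the
   coordinates 0..k-1 are ever used. *)
Definition vec := nat -> R.

Fixpoint vsum (k : nat) (f : nat -> R) : R :=
  match k with
  | O => 0
  | S k' => vsum k' f + f k'
  end.

Definition vnorm (k : nat) (v : vec) : R := sqrt (vsum k (fun j => v j ^ 2)).

Definition upd (z : vec) (i : nat) (t : R) : vec :=
  fun j => if Nat.eq_dec j i then t else z j.

Definition is_partial (f : vec -> R) (i : nat) (g : vec -> R) : Prop :=
  forall z, derivable_pt_lim (fun t => f (upd z i t)) (z i) (g z).

Definition poly_growth (k : nat) (f : vec -> R) : Prop :=
  exists (C : R) (n : nat), 0 < C /\
    forall z, Rabs (f z) <= C * (1 + vnorm k z ^ n).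

(* C^infty_poly on R^k: all iterated partial derivatives exist
   (D (i :: l) = partial_i (D l)) and all of them have polynomial growth. *)
Definition C_inf_poly (k : nat) (f : vec -> R) : Prop :=
  exists D : list nat -> vec -> R,
    D nil = f /\
    (forall l i, (i < k)%nat -> is_partial (D l) i (D (i :: l))) /\
    (forall l, poly_growth k (D l)).

Definition A1a (k : nat) (V : vec -> R) : Prop := forall z, 0 <= V z.

(* Assumption A1 (b): operator norm of the Hessian bounded by nu > 0.
   G i = partial_i V,  H i j = partial_j partial_i V. *)
Definition A1b (k : nat) (V : vec -> R) : Prop :=
  exists (nu : R) (G : nat -> vec -> R) (H : nat -> nat -> vec -> R),
    0 < nu /\
    (forall i, (i < k)%nat -> is_partial V i (G i)) /\
    (forall i j, (i < k)%nat -> (j < k)%nat -> is_partial (G i) j (H i j)) /\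
    (forall z v, vnorm k (fun i => vsum k (fun j => H i j z * v j))
                 <= nu * vnorm k v).

Definition A1c (k : nat) (V : vec -> R) : Prop := C_inf_poly k V.

Definition C_beta (beta : R) : R := beta * (2 - beta) / (8 * (1 - beta)).

Definition A2 (k : nat) (gamma : R) (V : vec -> R) : Prop :=
  exists (alpha beta : R) (G : nat -> vec -> R),
    0 < alpha /\ 0 < beta < 1 /\
    (forall i, (i < k)%nat -> is_partial V i (G i)) /\
    (forall z, / 2 * vsum k (fun i => G i z * z i)
               >= beta * V z + gamma ^ 2 * C_beta beta * vnorm k z ^ 2 - alpha).

Definition softplus (t : R) : R := ln (1 + exp t).

Definition hmap (r : nat) (W : nat -> nat -> R) (b : vec) (z : vec) : vec :=
  fun i => softplus (vsum r (fun j => W i j * z j) + b i).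

Definition gauss_density (k : nat) (mu : vec) (s : R) (y : vec) : R :=
  Rpower (2 * PI * s) (- INR k / 2) *
  exp (- (vnorm k (fun i => y i - mu i)) ^ 2 / (2 * s)).

(* conditional density of Z given X = x (Bayes' formula), where px is the
   marginal density p(x) of X at x:
   p(z | x) = p(x | z) phi(z) / p(x). *)
Definition posterior (r m : nat) (W : nat -> nat -> R) (b : vec) (sigma2 : R)
  (px : R) (x : vec) (z : vec) : R :=
  gauss_density m (hmap r W b z) sigma2 x * gauss_density r (fun _ => 0) 1 z / px.

Definition Vpot (r m : nat) (W : nat -> nat -> R) (b : vec) (sigma2 : R)
  (px : R) (x : vec) (z : vec) : R :=
  - ln (posterior r m W b sigma2 px x z).

(* Up to the additive constant coming from the Gaussian normalisations and
   p(x), V(z) = |x - a(Wz + b)|^2 / (2 sigma2) + |z|^2 / 2.  Since a' = s is the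
   sigmoid and s' = s (1 - s), every iterated partial derivative of V is a
   polynomial in the coordinates of z and the values a(w_k.z + b_k),
   s(w_k.z + b_k); as a(t) <= |t| + 1 and 0 < s < 1, all of them grow
   polynomially.  The Hessian is the identity plus a bounded matrix because
   a(t) (1 - s(t)) <= 1.  For A2 the key scalar estimate is
   (a(u) - y) s(u) (u - c) >= (a(u) - y)^2 / 2 - K(y, c) for all real u, so
   that <grad V(z), z> / 2 dominates V(z) / 2 + |z|^2 / 4 up to a constant;
   it then suffices to pick beta <= 1/2 with gamma^2 C_beta <= 1/4. *)

From Stdlib Require Import Reals Lra Lia Psatz FunctionalExtensionality.
Open Scope R_scope.

Lemma derivable_pt_lim_ext_eq (f g : R -> R) x l l' :
  derivable_pt_lim g x l' -> (forall t, g t = f t) -> l' = l ->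
  derivable_pt_lim f x l.
Proof. intros H Hgf <-. exact (derivable_pt_lim_ext g f x l' Hgf H). Qed.

Lemma exp_le_compat a c : a <= c -> exp a <= exp c.
Proof. intros [H|H]; [left; now apply exp_increasing|subst; lra]. Qed.

Lemma ln_le_of_le_exp a c : 0 < a -> a <= exp c -> ln a <= c.
Proof.
  intros Ha H. destruct (Rle_or_lt (ln a) c) as [h|h]; auto.
  apply exp_increasing in h. rewrite exp_ln in h by lra. lra.
Qed.

Lemma one_plus_exp_pos t : 0 < 1 + exp t.
Proof. pose proof (exp_pos t); lra. Qed.

Definition sigmoid (t : R) : R := exp t / (1 + exp t).

Lemma derivable_pt_lim_one_plus_exp t :
  derivable_pt_lim (fun u => 1 + exp u) t (exp t).
Proof.
  apply (derivable_pt_lim_ext_eq _ (plus_fct (fun _ => 1) exp) _ _ (0 + exp t));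
    [|reflexivity|ring].
  apply derivable_pt_lim_plus; [apply derivable_pt_lim_const|apply derivable_pt_lim_exp].
Qed.

Lemma derivable_pt_lim_softplus t : derivable_pt_lim softplus t (sigmoid t).
Proof.
  pose proof (one_plus_exp_pos t).
  apply (derivable_pt_lim_ext_eq _ (comp ln (fun u => 1 + exp u)) _ _
           (/ (1 + exp t) * exp t)); [|reflexivity|unfold sigmoid; field; lra].
  apply derivable_pt_lim_comp;
    [apply derivable_pt_lim_one_plus_exp|now apply derivable_pt_lim_ln].
Qed.

Lemma derivable_pt_lim_sigmoid t :
  derivable_pt_lim sigmoid t (sigmoid t * (1 - sigmoid t)).
Proof.
  pose proof (one_plus_exp_pos t).
  eapply derivable_pt_lim_ext_eq.
  - apply (derivable_pt_lim_div exp (fun u => 1 + exp u));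
      [apply derivable_pt_lim_exp|apply derivable_pt_lim_one_plus_exp|lra].
  - reflexivity.
  - unfold sigmoid, Rsqr. field. lra.
Qed.

Lemma softplus_pos u : 0 < softplus u.
Proof.
  unfold softplus. rewrite <- ln_1. apply ln_increasing; [lra|].
  pose proof (exp_pos u); lra.
Qed.

Lemma softplus_ge u : u <= softplus u.
Proof.
  unfold softplus. rewrite <- (ln_exp u) at 1. left.
  pose proof (exp_pos u). apply ln_increasing; lra.
Qed.

Lemma softplus_le_exp u : softplus u <= exp u.
Proof.
  apply ln_le_of_le_exp; [apply one_plus_exp_pos|apply exp_ineq1_le].
Qed.

Lemma softplus_le_abs u : softplus u <= Rabs u + 1.
Proof.
  apply ln_le_of_le_exp; [apply one_plus_exp_pos|].
  rewrite exp_plus.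
  pose proof (exp_ineq1_le 1). pose proof (exp_ineq1_le (Rabs u)).
  pose proof (exp_le_compat u (Rabs u) (Rle_abs u)). pose proof (Rabs_pos u).
  pose proof (exp_pos u). nra.
Qed.

Lemma sigmoid_bounds u : 0 < sigmoid u < 1.
Proof.
  pose proof (exp_pos u). pose proof (one_plus_exp_pos u). unfold sigmoid. split.
  - apply Rdiv_lt_0_compat; lra.
  - apply Rmult_lt_reg_r with (1 + exp u); [lra|]. field_simplify; lra.
Qed.

Lemma one_minus_sigmoid u : 1 - sigmoid u = / (1 + exp u).
Proof. unfold sigmoid. pose proof (one_plus_exp_pos u). field. lra. Qed.

Lemma sigmoid_le_exp u : sigmoid u <= exp u.
Proof.
  pose proof (exp_pos u). pose proof (one_plus_exp_pos u). unfold sigmoid.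
  apply Rmult_le_reg_r with (1 + exp u); [lra|]. field_simplify; nra.
Qed.

Lemma softplus_mul_one_minus_sigmoid_le u : softplus u * (1 - sigmoid u) <= 1.
Proof.
  rewrite one_minus_sigmoid. pose proof (exp_pos u). pose proof (softplus_pos u).
  apply Rmult_le_reg_r with (1 + exp u); [lra|].
  rewrite Rmult_assoc, Rinv_l by lra.
  destruct (Rle_or_lt u 0).
  - pose proof (softplus_le_exp u). lra.
  - pose proof (softplus_le_abs u). rewrite Rabs_right in * by lra.
    pose proof (exp_ineq1_le u). lra.
Qed.

Lemma sigmoid_mul_opp_le u : u <= 0 -> sigmoid u * - u <= 1.
Proof.
  intros Hu. pose proof (sigmoid_le_exp u). pose proof (exp_pos u).
  pose proof (exp_ineq1_le (- u)) as Hx. rewrite exp_Ropp in Hx.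
  assert (exp u * - u <= 1).
  { apply Rmult_le_reg_r with (/ exp u); [apply Rinv_0_lt_compat; lra|].
    replace (exp u * - u * / exp u) with (- u) by (field; lra). lra. }
  nra.
Qed.

Lemma one_minus_sigmoid_mul_sqr_le u : 0 <= u -> (1 - sigmoid u) * u ^ 2 <= 4.
Proof.
  intros Hu. rewrite one_minus_sigmoid. pose proof (one_plus_exp_pos u).
  assert (Hsq : u ^ 2 <= 4 * exp u).
  { replace (exp u) with (exp (u / 2) * exp (u / 2)) by (rewrite <- exp_plus; f_equal; field).
    pose proof (exp_ineq1_le (u / 2)). nra. }
  apply Rmult_le_reg_r with (1 + exp u); [lra|].
  replace (/ (1 + exp u) * u ^ 2 * (1 + exp u)) with (u ^ 2) by (field; lra). lra.
Qed.

Lemma residual_curvature_le u y :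
  Rabs (y - softplus u) * (sigmoid u * (1 - sigmoid u)) <= Rabs y + 1.
Proof.
  pose proof (sigmoid_bounds u). pose proof (softplus_mul_one_minus_sigmoid_le u).
  pose proof (softplus_pos u).
  assert (Rabs (y - softplus u) <= Rabs y + softplus u) by (split_Rabs; lra).
  pose proof (Rabs_pos y).
  assert (0 <= sigmoid u * (1 - sigmoid u) <= 1) by nra.
  assert (softplus u * (sigmoid u * (1 - sigmoid u)) <= 1) by nra.
  nra.
Qed.

Definition coercivity_const (y c : R) : R := 8 + 3 * (1 + Rabs y + Rabs c) ^ 2.

Lemma softplus_coercive_nonpos u y c : u <= 0 ->
  (softplus u - y) * sigmoid u * (u - c) >= / 2 * (softplus u - y) ^ 2 - coercivity_const y c.
Proof.
  intros Hu. unfold coercivity_const. set (A := 1 + Rabs y + Rabs c).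
  pose proof (sigmoid_bounds u). pose proof (sigmoid_mul_opp_le u Hu).
  pose proof (softplus_pos u). pose proof (softplus_le_exp u).
  pose proof (exp_le_compat u 0 Hu). rewrite exp_0 in *.
  assert (Hs : Rabs (softplus u - y) <= A) by (unfold A; split_Rabs; lra).
  assert (Hg : Rabs (sigmoid u * (u - c)) <= A).
  { unfold A. rewrite Rabs_mult, (Rabs_right (sigmoid u)) by lra. split_Rabs; nra. }
  assert (Hp : Rabs ((softplus u - y) * (sigmoid u * (u - c))) <= A * A).
  { rewrite Rabs_mult. apply Rmult_le_compat; auto using Rabs_pos. }
  assert (Hsq : (softplus u - y) ^ 2 <= A ^ 2).
  { rewrite <- pow2_abs. apply pow_incr. split; [apply Rabs_pos|exact Hs]. }
  pose proof (Rle_abs (- ((softplus u - y) * (sigmoid u * (u - c))))) as Hn.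
  rewrite Rabs_Ropp in Hn. nra.
Qed.

Lemma softplus_coercive_pos u y c : 0 < u ->
  (softplus u - y) * sigmoid u * (u - c) >= / 2 * (softplus u - y) ^ 2 - coercivity_const y c.
Proof.
  intros Hu. unfold coercivity_const. set (A := 1 + Rabs y + Rabs c).
  set (s := softplus u). set (eps := 1 - sigmoid u).
  assert (Hd : u <= s <= u + 1).
  { pose proof (softplus_ge u). pose proof (softplus_le_abs u).
    rewrite Rabs_right in * by lra. unfold s; lra. }
  assert (Heps : 0 < eps < 1) by (pose proof (sigmoid_bounds u); unfold eps; lra).
  assert (Hepsu : eps * u ^ 2 <= 4) by (apply one_minus_sigmoid_mul_sqr_le; lra).
  (* (s - y)(u - c) = (s - y)^2 + (s - y)(y - c - (s - u)), and |y - c - (s - u)| <= A *)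
  assert (Hmain : (s - y) * (u - c) >= / 2 * (s - y) ^ 2 - / 2 * A ^ 2).
  { assert (Hq : (y - c - (s - u)) ^ 2 <= A ^ 2).
    { rewrite <- (pow2_abs (y - c - (s - u))). apply pow_incr.
      split; [apply Rabs_pos|unfold A; split_Rabs; lra]. }
    pose proof (pow2_ge_0 ((s - y) + (y - c - (s - u)))). nra. }
  (* 1 - sigmoid u decays like exp (- u) and absorbs the quadratic growth in u. *)
  assert (Hrest : Rabs (eps * (s - y) * (u - c)) <= 8 + 2 * A ^ 2).
  { assert (Rabs (s - y) <= u + A) by (unfold A; split_Rabs; lra).
    assert (Rabs (u - c) <= u + A) by (unfold A; split_Rabs; lra).
    assert (Rabs (s - y) * Rabs (u - c) <= (u + A) ^ 2)
      by (simpl; rewrite Rmult_1_r; apply Rmult_le_compat; auto using Rabs_pos).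
    rewrite !Rabs_mult, (Rabs_right eps) by lra.
    pose proof (pow2_ge_0 (u - A)). nra. }
  replace ((s - y) * sigmoid u * (u - c)) with ((s - y) * (u - c) - eps * (s - y) * (u - c))
    by (unfold eps; ring).
  pose proof (Rle_abs (eps * (s - y) * (u - c))). pose proof (pow2_ge_0 A). lra.
Qed.

Lemma softplus_coercive u y c :
  (softplus u - y) * sigmoid u * (u - c) >= / 2 * (softplus u - y) ^ 2 - coercivity_const y c.
Proof.
  destruct (Rle_or_lt u 0);
    [apply softplus_coercive_nonpos|apply softplus_coercive_pos]; assumption.
Qed.

Lemma vsum_ext n f g : (forall j, (j < n)%nat -> f j = g j) -> vsum n f = vsum n g.
Proof.
  induction n as [|n IH]; simpl; intros H; [reflexivity|].
  rewrite IH, H; [reflexivity|lia|intros; apply H; lia].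
Qed.

Lemma vsum_plus n f g : vsum n (fun j => f j + g j) = vsum n f + vsum n g.
Proof. induction n as [|n IH]; simpl; [ring|rewrite IH; ring]. Qed.

Lemma vsum_mult_l n c f : vsum n (fun j => c * f j) = c * vsum n f.
Proof. induction n as [|n IH]; simpl; [ring|rewrite IH; ring]. Qed.

Lemma vsum_const n c : vsum n (fun _ => c) = INR n * c.
Proof. induction n as [|n IH]; simpl vsum; [simpl; ring|rewrite IH, S_INR; ring]. Qed.

Lemma vsum_delta n g i : (i < n)%nat ->
  vsum n (fun j => g j * (if Nat.eq_dec j i then 1 else 0)) = g i.
Proof.
  induction n as [|n IH]; simpl; intros Hi; [lia|].
  destruct (Nat.eq_dec n i) as [<-|Hn].
  - rewrite (vsum_ext _ _ (fun _ => 0)), vsum_const; [ring|].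
    intros j Hj. destruct (Nat.eq_dec j n); [lia|ring].
  - rewrite IH by lia. ring.
Qed.

Lemma vsum_comm n p (f : nat -> nat -> R) :
  vsum n (fun i => vsum p (fun k => f k i)) = vsum p (fun k => vsum n (fun i => f k i)).
Proof.
  induction n as [|n IH]; simpl.
  - rewrite vsum_const. ring.
  - rewrite IH, <- vsum_plus. reflexivity.
Qed.

Lemma vsum_le n f g : (forall j, (j < n)%nat -> f j <= g j) -> vsum n f <= vsum n g.
Proof.
  induction n as [|n IH]; simpl; intros H; [lra|].
  pose proof (H n ltac:(lia)). pose proof (IH ltac:(intros; apply H; lia)). lra.
Qed.

Lemma vsum_nonneg n f : (forall j, (j < n)%nat -> 0 <= f j) -> 0 <= vsum n f.
Proof. intros H. rewrite <- (Rmult_0_r (INR n)), <- vsum_const. now apply vsum_le. Qed.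

Lemma vsum_ge_term n f j :
  (forall j, (j < n)%nat -> 0 <= f j) -> (j < n)%nat -> f j <= vsum n f.
Proof.
  induction n as [|n IH]; simpl; intros H Hj; [lia|].
  pose proof (H n ltac:(lia)).
  destruct (Nat.eq_dec j n) as [->|Hjn].
  - pose proof (vsum_nonneg n f ltac:(intros; apply H; lia)). lra.
  - pose proof (IH ltac:(intros; apply H; lia) ltac:(lia)). lra.
Qed.

Lemma Rabs_vsum_le n f : Rabs (vsum n f) <= vsum n (fun j => Rabs (f j)).
Proof.
  induction n as [|n IH]; simpl; [rewrite Rabs_R0; lra|].
  eapply Rle_trans; [apply Rabs_triang|]. lra.
Qed.

Lemma vnorm_nonneg k z : 0 <= vnorm k z.
Proof. apply sqrt_pos. Qed.

Lemma vnorm_sqr k z : vnorm k z ^ 2 = vsum k (fun j => z j ^ 2).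
Proof.
  unfold vnorm. rewrite <- Rsqr_pow2. apply Rsqr_sqrt.
  apply vsum_nonneg. intros; apply pow2_ge_0.
Qed.

Lemma Rabs_coord_le_vnorm k z j : (j < k)%nat -> Rabs (z j) <= vnorm k z.
Proof.
  intros Hj. unfold vnorm. rewrite <- sqrt_Rsqr_abs. apply sqrt_le_1_alt.
  rewrite Rsqr_pow2. apply (vsum_ge_term k (fun j => z j ^ 2)); auto.
  intros; apply pow2_ge_0.
Qed.

Lemma vnorm_le_vsum_abs k w : vnorm k w <= vsum k (fun i => Rabs (w i)).
Proof.
  assert (H0 : forall k, 0 <= vsum k (fun i => Rabs (w i)))
    by (intros; apply vsum_nonneg; intros; apply Rabs_pos).
  unfold vnorm. rewrite <- (sqrt_Rsqr _ (H0 k)). apply sqrt_le_1_alt. unfold Rsqr.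
  induction k as [|k IH]; cbn [vsum]; [lra|].
  pose proof (H0 k). pose proof (Rabs_pos (w k)).
  rewrite <- (pow2_abs (w k)). nra.
Qed.

Lemma vnorm_matvec_le k (A : nat -> nat -> R) M v :
  (forall i j, (i < k)%nat -> (j < k)%nat -> Rabs (A i j) <= M) ->
  vnorm k (fun i => vsum k (fun j => A i j * v j)) <= INR k * INR k * M * vnorm k v.
Proof.
  intros HA. eapply Rle_trans; [apply vnorm_le_vsum_abs|].
  replace (INR k * INR k * M * vnorm k v) with (vsum k (fun _ => vsum k (fun _ => M * vnorm k v)))
    by (rewrite !vsum_const; ring).
  apply vsum_le. intros i Hi.
  eapply Rle_trans; [apply Rabs_vsum_le|]. apply vsum_le. intros j Hj.
  rewrite Rabs_mult.
  apply Rmult_le_compat; auto using Rabs_pos, Rabs_coord_le_vnorm.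
Qed.

Lemma pow_one_plus_le y n : 0 <= y -> (1 + y) ^ n <= 2 ^ n * (1 + y ^ n).
Proof.
  intros Hy. pose proof (pow_le y n Hy). pose proof (pow_le 2 n ltac:(lra)).
  destruct (Rle_or_lt y 1).
  - assert ((1 + y) ^ n <= 2 ^ n) by (apply pow_incr; lra). nra.
  - assert ((1 + y) ^ n <= (2 * y) ^ n) by (apply pow_incr; lra).
    rewrite Rpow_mult_distr in *. nra.
Qed.

Section PolyBounded.
Variable k : nat.

Definition poly_bounded (f : vec -> R) : Prop :=
  exists (C : R) (n : nat), 0 < C /\ forall z, Rabs (f z) <= C * (1 + vnorm k z) ^ n.

Lemma poly_bounded_growth f : poly_bounded f -> poly_growth k f.
Proof.
  intros (C & n & HC & H). exists (C * 2 ^ n), n. split.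
  - apply Rmult_lt_0_compat; [exact HC|apply pow_lt; lra].
  - intros z. eapply Rle_trans; [apply H|]. rewrite Rmult_assoc.
    apply Rmult_le_compat_l; [lra|apply pow_one_plus_le, vnorm_nonneg].
Qed.

Lemma poly_bounded_const c : poly_bounded (fun _ => c).
Proof.
  exists (Rabs c + 1), 0%nat. split; [pose proof (Rabs_pos c); lra|].
  intros; simpl; lra.
Qed.

Lemma poly_bounded_coord j : (j < k)%nat -> poly_bounded (fun z => z j).
Proof.
  intros Hj. exists 1, 1%nat. split; [lra|]. intros z.
  pose proof (Rabs_coord_le_vnorm k z j Hj). simpl. lra.
Qed.

Lemma poly_bounded_add f g :
  poly_bounded f -> poly_bounded g -> poly_bounded (fun z => f z + g z).
Proof.
  intros (C1 & n1 & H1 & F) (C2 & n2 & H2 & G). exists (C1 + C2), (n1 + n2)%nat.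
  split; [lra|]. intros z. pose proof (vnorm_nonneg k z).
  assert ((1 + vnorm k z) ^ n1 <= (1 + vnorm k z) ^ (n1 + n2)) by (apply Rle_pow; [lra|lia]).
  assert ((1 + vnorm k z) ^ n2 <= (1 + vnorm k z) ^ (n1 + n2)) by (apply Rle_pow; [lra|lia]).
  specialize (F z). specialize (G z).
  eapply Rle_trans; [apply Rabs_triang|]. nra.
Qed.

Lemma poly_bounded_mul f g :
  poly_bounded f -> poly_bounded g -> poly_bounded (fun z => f z * g z).
Proof.
  intros (C1 & n1 & H1 & F) (C2 & n2 & H2 & G). exists (C1 * C2), (n1 + n2)%nat.
  split; [nra|]. intros z. rewrite Rabs_mult, pow_add.
  replace (C1 * C2 * ((1 + vnorm k z) ^ n1 * (1 + vnorm k z) ^ n2))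
    with ((C1 * (1 + vnorm k z) ^ n1) * (C2 * (1 + vnorm k z) ^ n2)) by ring.
  apply Rmult_le_compat; auto using Rabs_pos.
Qed.

Lemma poly_bounded_vsum n (f : nat -> vec -> R) :
  (forall j, (j < n)%nat -> poly_bounded (f j)) -> poly_bounded (fun z => vsum n (fun j => f j z)).
Proof.
  induction n as [|n IH]; intros H; simpl.
  - apply poly_bounded_const.
  - apply poly_bounded_add; [apply IH; intros; apply H; lia|apply H; lia].
Qed.

Lemma poly_bounded_dominated f g c :
  poly_bounded g -> (forall z, Rabs (f z) <= Rabs (g z) + c) -> poly_bounded f.
Proof.
  intros (C & n & HC & G) H. exists (C + Rabs c), n. split; [pose proof (Rabs_pos c); lra|].
  intros z. pose proof (pow_R1_Rle (1 + vnorm k z) n ltac:(pose proof (vnorm_nonneg k z); lra)).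
  specialize (G z). specialize (H z). pose proof (Rle_abs c). pose proof (Rabs_pos c). nra.
Qed.

End PolyBounded.

Lemma derivable_pt_lim_vsum_upd n (c : nat -> R) z i t0 :
  derivable_pt_lim (fun t => vsum n (fun j => c j * upd z i t j)) t0
    (if Compare_dec.lt_dec i n then c i else 0).
Proof.
  induction n as [|n IH]; cbn [vsum].
  - destruct (Compare_dec.lt_dec i 0); [lia|apply derivable_pt_lim_const].
  - assert (Hn : derivable_pt_lim (fun t => upd z i t n) t0 (if Nat.eq_dec n i then 1 else 0)).
    { unfold upd. destruct (Nat.eq_dec n i);
        [apply derivable_pt_lim_id|apply derivable_pt_lim_const]. }
    eapply derivable_pt_lim_ext_eq.
    + exact (derivable_pt_lim_plus _ _ _ _ _ IH (derivable_pt_lim_scal _ (c n) _ _ Hn)).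
    + reflexivity.
    + destruct (Compare_dec.lt_dec i n), (Compare_dec.lt_dec i (S n)), (Nat.eq_dec n i);
        try lia; subst; ring.
Qed.

(** * Expressions closed under partial differentiation *)

Inductive expr :=
| ECst (c : R)
| ECoord (j : nat)
| EAdd (e1 e2 : expr)
| EMul (e1 e2 : expr)
| ESoftplus (k : nat)
| ESigmoid (k : nat).

Fixpoint esum (n : nat) (f : nat -> expr) : expr :=
  match n with O => ECst 0 | S n' => EAdd (esum n' f) (f n') end.

Section Expressions.
Variable r : nat.
Variable W : nat -> nat -> R.
Variable b : vec.

Definition lin (k : nat) (z : vec) : R := vsum r (fun j => W k j * z j) + b k.

Definition lin_coef (k i : nat) : R := if Compare_dec.lt_dec i r then W k i else 0.

(* Coordinates of index >= r evaluate to 0: only then is every expression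
   polynomially bounded in the norm of the first r coordinates. *)
Fixpoint eval (e : expr) (z : vec) : R :=
  match e with
  | ECst c => c
  | ECoord j => if Compare_dec.lt_dec j r then z j else 0
  | EAdd e1 e2 => eval e1 z + eval e2 z
  | EMul e1 e2 => eval e1 z * eval e2 z
  | ESoftplus k => softplus (lin k z)
  | ESigmoid k => sigmoid (lin k z)
  end.

Fixpoint ederiv (i : nat) (e : expr) : expr :=
  match e with
  | ECst _ => ECst 0
  | ECoord j => ECst (if Compare_dec.lt_dec j r then if Nat.eq_dec j i then 1 else 0 else 0)
  | EAdd e1 e2 => EAdd (ederiv i e1) (ederiv i e2)
  | EMul e1 e2 => EAdd (EMul (ederiv i e1) e2) (EMul e1 (ederiv i e2))
  | ESoftplus k => EMul (ESigmoid k) (ECst (lin_coef k i))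
  | ESigmoid k =>
      EMul (EMul (ESigmoid k) (EAdd (ECst 1) (EMul (ECst (-1)) (ESigmoid k))))
           (ECst (lin_coef k i))
  end.

Lemma eval_esum n f z : eval (esum n f) z = vsum n (fun k => eval (f k) z).
Proof. induction n as [|n IH]; simpl; [reflexivity|now rewrite IH]. Qed.

Lemma ederiv_esum i n f : ederiv i (esum n f) = esum n (fun k => ederiv i (f k)).
Proof. induction n as [|n IH]; simpl; [reflexivity|now rewrite IH]. Qed.

Lemma derivable_pt_lim_lin k z i t0 :
  derivable_pt_lim (fun t => lin k (upd z i t)) t0 (lin_coef k i).
Proof.
  eapply derivable_pt_lim_ext_eq.
  - apply derivable_pt_lim_plus;
      [apply (derivable_pt_lim_vsum_upd r (W k))|apply (derivable_pt_lim_const (b k))].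
  - reflexivity.
  - unfold lin_coef. ring.
Qed.

Lemma derivable_pt_lim_eval i e z t0 :
  derivable_pt_lim (fun t => eval e (upd z i t)) t0 (eval (ederiv i e) (upd z i t0)).
Proof.
  induction e as [c|j|e1 IH1 e2 IH2|e1 IH1 e2 IH2|k|k]; simpl.
  - apply derivable_pt_lim_const.
  - destruct (Compare_dec.lt_dec j r); [|apply derivable_pt_lim_const].
    unfold upd. destruct (Nat.eq_dec j i);
      [apply derivable_pt_lim_id|apply derivable_pt_lim_const].
  - exact (derivable_pt_lim_plus _ _ _ _ _ IH1 IH2).
  - exact (derivable_pt_lim_mult _ _ _ _ _ IH1 IH2).
  - apply (derivable_pt_lim_comp (fun t => lin k (upd z i t)) softplus);
      [apply derivable_pt_lim_lin|apply derivable_pt_lim_softplus].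
  - eapply derivable_pt_lim_ext_eq.
    + apply (derivable_pt_lim_comp (fun t => lin k (upd z i t)) sigmoid);
        [apply derivable_pt_lim_lin|apply derivable_pt_lim_sigmoid].
    + reflexivity.
    + ring.
Qed.

Lemma upd_same (z : vec) i : upd z i (z i) = z.
Proof.
  apply functional_extensionality; intro j. unfold upd.
  destruct (Nat.eq_dec j i); subst; reflexivity.
Qed.

Lemma is_partial_eval i e : is_partial (eval e) i (eval (ederiv i e)).
Proof. intro z. rewrite <- (upd_same z i) at 2. apply derivable_pt_lim_eval. Qed.

Lemma poly_bounded_lin k : poly_bounded r (lin k).
Proof.
  apply poly_bounded_add; [|apply poly_bounded_const].
  apply (poly_bounded_vsum r r (fun j z => W k j * z j)). intros j Hj.
  apply poly_bounded_mul; [apply poly_bounded_const|now apply poly_bounded_coord].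
Qed.

Lemma poly_bounded_eval e : poly_bounded r (eval e).
Proof.
  induction e as [c|j|e1 IH1 e2 IH2|e1 IH1 e2 IH2|k|k]; simpl.
  - apply poly_bounded_const.
  - destruct (Compare_dec.lt_dec j r);
      [now apply poly_bounded_coord|apply poly_bounded_const].
  - now apply poly_bounded_add.
  - now apply poly_bounded_mul.
  - apply (poly_bounded_dominated r _ (lin k) 1); [apply poly_bounded_lin|].
    intros z. pose proof (softplus_pos (lin k z)). rewrite Rabs_right by lra.
    apply softplus_le_abs.
  - apply (poly_bounded_dominated r _ (fun _ => 0) 1); [apply poly_bounded_const|].
    intros z. pose proof (sigmoid_bounds (lin k z)). rewrite Rabs_R0, Rabs_right; lra.
Qed.

Lemma C_inf_poly_eval e : C_inf_poly r (eval e).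
Proof.
  exists (fun l => eval (List.fold_right ederiv e l)). split; [reflexivity|split].
  - intros l i _. apply is_partial_eval.
  - intros l. apply poly_bounded_growth, poly_bounded_eval.
Qed.

End Expressions.

Lemma gauss_density_pos k mu s y : 0 < gauss_density k mu s y.
Proof. apply Rmult_lt_0_compat; [apply exp_pos|apply exp_pos]. Qed.

Lemma ln_gauss_density k mu s y :
  ln (gauss_density k mu s y) =
  - INR k / 2 * ln (2 * PI * s) - vnorm k (fun i => y i - mu i) ^ 2 / (2 * s).
Proof.
  unfold gauss_density, Rpower.
  rewrite ln_mult, !ln_exp by apply exp_pos. unfold Rdiv. ring.
Qed.

Lemma exists_small_beta gamma :
  exists beta, 0 < beta <= / 2 /\ gamma ^ 2 * C_beta beta <= / 4.
Proof.
  pose proof (pow2_ge_0 gamma).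
  exists (/ (2 * (1 + gamma ^ 2))).
  set (beta := / (2 * (1 + gamma ^ 2))).
  assert (Hb : 0 < beta <= / 2).
  { unfold beta. split; [apply Rinv_0_lt_compat; lra|]. apply Rinv_le_contravar; lra. }
  split; [exact Hb|].
  assert (HC : 0 <= C_beta beta <= beta / 2).
  { unfold C_beta. split.
    - apply Rmult_le_pos; [nra|]. left. apply Rinv_0_lt_compat. lra.
    - apply Rmult_le_reg_r with (8 * (1 - beta)); [lra|].
      unfold Rdiv. rewrite Rmult_assoc, Rinv_l by lra. nra. }
  assert (gamma ^ 2 * beta <= / 2).
  { unfold beta. apply Rmult_le_reg_r with (2 * (1 + gamma ^ 2)); [lra|].
    rewrite Rmult_assoc, Rinv_l by lra. lra. }
  nra.
Qed.

Section Potential.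
Variables (r m : nat) (W : nat -> nat -> R) (b : vec) (sigma2 : R) (x : vec) (px : R).
Hypothesis sigma2_pos : 0 < sigma2.

Local Notation eval := (eval r W b).
Local Notation ederiv := (ederiv r W).
Local Notation lin := (lin r W b).

Definition Vconst : R :=
  INR m / 2 * ln (2 * PI * sigma2) + INR r / 2 * ln (2 * PI * 1) + ln px.

Definition resid_expr (k : nat) : expr := EAdd (ECst (x k)) (EMul (ECst (-1)) (ESoftplus k)).

Definition Vexpr : expr :=
  EAdd (ECst Vconst)
    (EAdd (EMul (ECst (/ (2 * sigma2))) (esum m (fun k => EMul (resid_expr k) (resid_expr k))))
          (EMul (ECst (/ 2)) (esum r (fun j => EMul (ECoord j) (ECoord j))))).

Lemma eval_Vexpr z : eval Vexpr z =
  Vconst + / (2 * sigma2) * vsum m (fun k => (x k - softplus (lin k z)) ^ 2)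
  + / 2 * vsum r (fun j => z j ^ 2).
Proof.
  unfold Vexpr, resid_expr; cbn [eval]. rewrite !eval_esum; cbn [eval].
  rewrite (vsum_ext r _ (fun j => z j ^ 2)), (vsum_ext m _ (fun k => (x k - softplus (lin k z)) ^ 2)).
  - ring.
  - intros; ring.
  - intros j Hj. destruct (Compare_dec.lt_dec j r); [ring|lia].
Qed.

Lemma Vpot_eq_eval (px_pos : 0 < px) : Vpot r m W b sigma2 px x = eval Vexpr.
Proof.
  apply functional_extensionality. intro z.
  unfold Vpot, posterior, Rdiv.
  rewrite !ln_mult, ln_Rinv, !ln_gauss_density, !vnorm_sqr, eval_Vexpr;
    auto using gauss_density_pos, Rmult_lt_0_compat, Rinv_0_lt_compat; try lra.
  unfold hmap, lin, Vconst.
  rewrite (vsum_ext r (fun i => (z i - 0) ^ 2) (fun j => z j ^ 2)) by (intros; ring).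
  field. lra.
Qed.

Lemma Vconst_le_eval z : Vconst <= eval Vexpr z.
Proof.
  rewrite eval_Vexpr.
  assert (0 <= vsum m (fun k => (x k - softplus (lin k z)) ^ 2))
    by (apply vsum_nonneg; intros; apply pow2_ge_0).
  assert (0 <= vsum r (fun j => z j ^ 2)) by (apply vsum_nonneg; intros; apply pow2_ge_0).
  assert (0 < / (2 * sigma2)) by (apply Rinv_0_lt_compat; lra).
  nra.
Qed.

Lemma eval_grad i z : (i < r)%nat ->
  eval (ederiv i Vexpr) z =
  / sigma2 * vsum m (fun k => (softplus (lin k z) - x k) * sigmoid (lin k z) * W k i) + z i.
Proof.
  intros Hi. unfold Vexpr, resid_expr; cbn [ederiv eval].
  rewrite !ederiv_esum, !eval_esum; cbn [ederiv eval].
  rewrite !Rmult_0_l, !Rplus_0_l.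
  rewrite (vsum_ext r _ (fun j => 2 * z j * (if Nat.eq_dec j i then 1 else 0))).
  2:{ intros j Hj. destruct (Compare_dec.lt_dec j r); [|lia]. ring. }
  rewrite vsum_delta by exact Hi.
  rewrite (vsum_ext m _ (fun k => 2 * ((softplus (lin k z) - x k) * sigmoid (lin k z) * W k i))).
  2:{ intros k _. unfold lin_coef. destruct (Compare_dec.lt_dec i r); [ring|lia]. }
  rewrite vsum_mult_l. field. lra.
Qed.

Lemma grad_dot z :
  vsum r (fun i => eval (ederiv i Vexpr) z * z i) =
  / sigma2 * vsum m (fun k => (softplus (lin k z) - x k) * sigmoid (lin k z) * (lin k z - b k))
  + vsum r (fun j => z j ^ 2).
Proof.
  rewrite (vsum_ext r _ (fun i => / sigma2 * vsum m (fun k =>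
             (softplus (lin k z) - x k) * sigmoid (lin k z) * (W k i * z i)) + z i ^ 2)).
  2:{ intros i Hi. rewrite eval_grad by exact Hi. rewrite Rmult_plus_distr_r, Rmult_assoc.
      f_equal; [|ring]. f_equal. rewrite Rmult_comm, <- vsum_mult_l.
      apply vsum_ext. intros; ring. }
  rewrite vsum_plus, vsum_mult_l, vsum_comm. do 2 f_equal.
  apply vsum_ext. intros k _. rewrite vsum_mult_l. unfold lin. ring.
Qed.

Lemma eval_hess i j z : (i < r)%nat -> (j < r)%nat ->
  eval (ederiv j (ederiv i Vexpr)) z =
  / sigma2 * vsum m (fun k =>
    (sigmoid (lin k z) ^ 2
     + (softplus (lin k z) - x k) * (sigmoid (lin k z) * (1 - sigmoid (lin k z))))
    * (W k i * W k j))
  + (if Nat.eq_dec i j then 1 else 0).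
Proof.
  intros Hi Hj. unfold Vexpr, resid_expr; cbn [ederiv eval].
  rewrite !ederiv_esum, !eval_esum; cbn [ederiv eval].
  rewrite !Rmult_0_l, !Rplus_0_l.
  rewrite (vsum_ext r _ (fun l => 2 * (if Nat.eq_dec l j then 1 else 0)
                                    * (if Nat.eq_dec l i then 1 else 0))).
  2:{ intros l Hl. destruct (Compare_dec.lt_dec l r); [ring|lia]. }
  rewrite vsum_delta by exact Hi.
  rewrite (vsum_ext m _ (fun k => 2 * ((sigmoid (lin k z) ^ 2
     + (softplus (lin k z) - x k) * (sigmoid (lin k z) * (1 - sigmoid (lin k z))))
    * (W k i * W k j)))).
  2:{ intros k _. unfold lin_coef.
      destruct (Compare_dec.lt_dec i r), (Compare_dec.lt_dec j r); [ring|lia..]. }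
  rewrite vsum_mult_l.
  destruct (Nat.eq_dec i j), (Nat.eq_dec j i); try lia; field; lra.
Qed.

Definition row_l1 (k : nat) : R := vsum r (fun j => Rabs (W k j)).

Definition hess_bound : R := / sigma2 * vsum m (fun k => (Rabs (x k) + 2) * row_l1 k ^ 2) + 1.

Lemma hess_bound_ge1 : 1 <= hess_bound.
Proof.
  unfold hess_bound.
  assert (0 <= vsum m (fun k => (Rabs (x k) + 2) * row_l1 k ^ 2)).
  { apply vsum_nonneg. intros k _. pose proof (Rabs_pos (x k)).
    pose proof (pow2_ge_0 (row_l1 k)). nra. }
  assert (0 < / sigma2) by (apply Rinv_0_lt_compat; lra). nra.
Qed.

Lemma Rabs_hess_le i j z : (i < r)%nat -> (j < r)%nat ->
  Rabs (eval (ederiv j (ederiv i Vexpr)) z) <= hess_bound.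
Proof.
  intros Hi Hj. rewrite eval_hess by assumption. unfold hess_bound.
  eapply Rle_trans; [apply Rabs_triang|]. apply Rplus_le_compat.
  2:{ destruct (Nat.eq_dec i j); rewrite ?Rabs_R1, ?Rabs_R0; lra. }
  assert (0 < / sigma2) by (apply Rinv_0_lt_compat; lra).
  rewrite Rabs_mult, (Rabs_right (/ sigma2)) by lra.
  apply Rmult_le_compat_l; [lra|].
  eapply Rle_trans; [apply Rabs_vsum_le|]. apply vsum_le. intros k _.
  set (u := lin k z).
  assert (Hc : Rabs (sigmoid u ^ 2 + (softplus u - x k) * (sigmoid u * (1 - sigmoid u)))
               <= Rabs (x k) + 2).
  { pose proof (sigmoid_bounds u). pose proof (residual_curvature_le u (x k)).
    rewrite Rabs_minus_sym in *.
    eapply Rle_trans; [apply Rabs_triang|].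
    rewrite Rabs_mult, (Rabs_right (sigmoid u * _)), (Rabs_right (sigmoid u ^ 2)) by nra.
    nra. }
  assert (Hw : Rabs (W k i * W k j) <= row_l1 k ^ 2).
  { assert (Hrow : forall l, (l < r)%nat -> Rabs (W k l) <= row_l1 k).
    { intros l Hl. apply (vsum_ge_term r (fun j => Rabs (W k j))); auto using Rabs_pos. }
    rewrite Rabs_mult, <- Rsqr_pow2. apply Rmult_le_compat; auto using Rabs_pos. }
  rewrite Rabs_mult. apply Rmult_le_compat; auto using Rabs_pos.
Qed.

Lemma A1b_Vexpr : A1b r (eval Vexpr).
Proof.
  exists (INR r * INR r * hess_bound + 1), (fun i => eval (ederiv i Vexpr)),
    (fun i j => eval (ederiv j (ederiv i Vexpr))).
  pose proof hess_bound_ge1. pose proof (pos_INR r).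
  split; [nra|split; [|split]].
  - intros i _. apply is_partial_eval.
  - intros i j _ _. apply is_partial_eval.
  - intros z v. eapply Rle_trans.
    { apply vnorm_matvec_le. intros i j Hi Hj. now apply Rabs_hess_le. }
    pose proof (vnorm_nonneg r v). nra.
Qed.

Definition coercivity_total : R := vsum m (fun k => coercivity_const (x k) (b k)).

Lemma coercivity_total_nonneg : 0 <= coercivity_total.
Proof.
  apply vsum_nonneg. intros k _. unfold coercivity_const.
  pose proof (pow2_ge_0 (1 + Rabs (x k) + Rabs (b k))). lra.
Qed.

Lemma coercive_sum z :
  vsum m (fun k => (softplus (lin k z) - x k) * sigmoid (lin k z) * (lin k z - b k))
  >= / 2 * vsum m (fun k => (x k - softplus (lin k z)) ^ 2) - coercivity_total.
Proof.
  unfold coercivity_total.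
  replace (/ 2 * vsum m (fun k => (x k - softplus (lin k z)) ^ 2)
           - vsum m (fun k => coercivity_const (x k) (b k)))
    with (vsum m (fun k => / 2 * (softplus (lin k z) - x k) ^ 2
                           + -1 * coercivity_const (x k) (b k)))
    by (rewrite vsum_plus, !vsum_mult_l, (vsum_ext m _ (fun k => (x k - softplus (lin k z)) ^ 2))
          by (intros; ring); ring).
  apply Rle_ge, vsum_le. intros k _.
  pose proof (softplus_coercive (lin k z) (x k) (b k)). lra.
Qed.

Lemma A2_Vexpr gamma : A2 r gamma (eval Vexpr).
Proof.
  destruct (exists_small_beta gamma) as (beta & Hb & Hgb).
  pose proof coercivity_total_nonneg.
  assert (Hc : 0 < / sigma2) by (apply Rinv_0_lt_compat; lra).
  exists (/ (2 * sigma2) * coercivity_total + Rabs (beta * Vconst) + 1), beta,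
    (fun i => eval (ederiv i Vexpr)).
  split; [|split; [lra|split]].
  - assert (0 < / (2 * sigma2)) by (apply Rinv_0_lt_compat; lra).
    pose proof (Rabs_pos (beta * Vconst)). nra.
  - intros i _. apply is_partial_eval.
  - intro z. rewrite grad_dot, eval_Vexpr, vnorm_sqr.
    pose proof (coercive_sum z) as Hcs.
    set (S1 := vsum m (fun k => (softplus (lin k z) - x k) * sigmoid (lin k z) * (lin k z - b k))) in *.
    set (S2 := vsum m (fun k => (x k - softplus (lin k z)) ^ 2)) in *.
    set (Sz := vsum r (fun j => z j ^ 2)).
    assert (0 <= S2) by (apply vsum_nonneg; intros; apply pow2_ge_0).
    assert (0 <= Sz) by (apply vsum_nonneg; intros; apply pow2_ge_0).
    pose proof (Rle_abs (beta * Vconst)).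
    replace (/ (2 * sigma2)) with (/ 2 * / sigma2) by (field; lra).
    assert (/ sigma2 * S1 >= / sigma2 * (/ 2 * S2 - coercivity_total))
      by (apply Rle_ge, Rmult_le_compat_l; lra).
    assert (beta * (/ sigma2 * S2) <= / 2 * (/ sigma2 * S2))
      by (apply Rmult_le_compat_r; [apply Rmult_le_pos|]; lra).
    assert (gamma ^ 2 * C_beta beta * Sz <= / 4 * Sz) by (apply Rmult_le_compat_r; lra).
    assert (beta * Sz <= / 2 * Sz) by (apply Rmult_le_compat_r; lra).
    lra.
Qed.

End Potential.

Theorem corollary1 (r m : nat) (hr : (1 <= r)%nat) (hm : (1 <= m)%nat)
  (W : nat -> nat -> R) (b : vec) (sigma2 : R) (hs : 0 < sigma2)
  (x : vec) (px : R) (hpx : 0 < px) :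
  let V := Vpot r m W b sigma2 px x in
  (exists L : R, forall z, L <= V z) /\
  A1b r V /\ A1c r V /\
  (forall gamma, 0 < gamma -> A2 r gamma V).
Proof.
  intros V. subst V. rewrite (Vpot_eq_eval r m W b sigma2 x px hs hpx).
  split; [|split; [|split]].
  - exists (Vconst r m sigma2 px). exact (Vconst_le_eval r m W b sigma2 x px hs).
  - exact (A1b_Vexpr r m W b sigma2 x px hs).
  - apply C_inf_poly_eval.
  - intros gamma _. exact (A2_Vexpr r m W b sigma2 x px hs gamma).
Qed.
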